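(* Let $\Lambda$ be an artin algebra and $Y$ a (finite length) $\Lambda$-module. Then the poset $[\to Y\rangle$ is a modular lattice.
   Context: All modules are finite length left $\Lambda$-modules. For maps $f: X\to Y$, $f': X'\to Y$ ending in $Y$, write $f\preceq f'$ if there is $h: X\to X'$ with $f=f'h$. The maps $f,f'$ are right equivalent if $f\preceq f'$ and $f'\preceq f$; the right equivalence class of $f$ is $[f\rangle$. $[\to Y\rangle$ denotes the set of right equivalence classes of maps ending in $Y$, partially ordered by $[f\rangle\le[f'\rangle$ iff $f\preceq f'$. (In this poset the meet of $[f_1\rangle,[f_2\rangle$ is given by the composite of a pullback of $f_1,f_2$ with $f_1$, and the join by $[f_1,f_2]: X_1\oplus X_2\to Y$.) *)

From HB Require Import structures.
From mathcomp Require Import all_boot all_order all_algebra.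
Set Implicit Arguments. Unset Strict Implicit. Unset Printing Implicit Defensive.
Import GRing.Theory.
Local Open Scope ring_scope.

Definition is_ideal (k : comNzRingType) (I : k -> Prop) : Prop :=
  [/\ I 0, (forall a b, I a -> I b -> I (a + b)) & (forall r a, I a -> I (r * a))].

Definition artinian_ring (k : comNzRingType) : Prop :=
  forall I : nat -> (k -> Prop),
    (forall n, is_ideal (I n)) ->
    (forall n x, I n.+1 x -> I n x) ->
    exists N, forall n, (N <= n)%N -> forall x, I n x <-> I N x.

Definition artin_algebra (k : comNzRingType) (L : nzRingType)
  (phi : {rmorphism k -> L}) : Prop :=
  [/\ artinian_ring k,
      (forall c x, phi c * x = x * phi c) &
      exists s : seq L, forall x : L,
        exists c : seq k, x = \sum_(i < size s) phi (nth 0 c i) * nth 0 s i].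

Definition is_submodule (L : nzRingType) (X : lmodType L) (M : X -> Prop) : Prop :=
  [/\ M 0, (forall u v, M u -> M v -> M (u + v)) & (forall (a : L) u, M u -> M (a *: u))].

Definition finite_length (L : nzRingType) (X : lmodType L) : Prop :=
  exists n : nat, forall (m : nat) (M : nat -> (X -> Prop)),
    (forall i, is_submodule (M i)) ->
    (forall i, (i < m)%N ->
       (forall x, M i x -> M i.+1 x) /\ exists x, M i.+1 x /\ ~ M i x) ->
    (m <= n)%N.

Record FLMod (L : nzRingType) := {
  fl_carrier :> lmodType L;
  fl_finite : finite_length fl_carrier }.

Definition map_to (L : nzRingType) (Y : lmodType L) : Type :=
  { X : FLMod L & {linear X -> Y} }.

Definition map_le (L : nzRingType) (Y : lmodType L) (f f' : map_to Y) : Prop :=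
  exists h : {linear (projT1 f) -> (projT1 f')},
    forall x, projT2 f x = projT2 f' (h x).

(* Order-theoretic notions on a preordered type; they are invariant under the
   equivalence a ~ b <-> le a b /\ le b a, so they describe the poset of classes. *)
Definition is_lub (T : Type) (le : T -> T -> Prop) (a b j : T) : Prop :=
  [/\ le a j, le b j & forall z, le a z -> le b z -> le j z].
Definition is_glb (T : Type) (le : T -> T -> Prop) (a b m : T) : Prop :=
  [/\ le m a, le m b & forall z, le z a -> le z b -> le z m].

(* The poset of equivalence classes of (T, le) is a modular lattice:
   all binary joins and meets exist, and for a <= c,
   (a v b) ^ c <= a v (b ^ c)  (the reverse inequality holds in any lattice). *)
Definition modular_lattice_classes (T : Type) (le : T -> T -> Prop) : Prop :=
  [/\ (forall a b, exists j, is_lub le a b j),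
      (forall a b, exists m, is_glb le a b m) &
      (forall a b c j m m' j', le a c ->
          is_lub le a b j -> is_glb le j c m ->
          is_glb le b c m' -> is_lub le a m' j' -> le m j')].

From HB Require Import structures.
From mathcomp Require Import all_boot all_order all_algebra zify.
From Stdlib Require Import Classical.
Set Implicit Arguments. Unset Strict Implicit. Unset Printing Implicit Defensive.
Import GRing.Theory.
Local Open Scope ring_scope.

(* The join of [f1 : X1 -> Y] and [f2 : X2 -> Y] is [[f1, f2] : X1 (+) X2 -> Y]
   and their meet is [f1] composed with the pullback of [f1, f2]; both sources
   have finite length since finite length is inherited by direct sums and
   submodules.  For [a <= c] with [a = c h], the map
   [((x, y), z) |-> (x, (y, z - h x))] exhibits [(a v b) ^ c <= a v (b ^ c)]. *)

Section OrderTheory.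

Variables (T : Type) (le : T -> T -> Prop) (join meet : T -> T -> T).
Hypothesis le_trans : forall a b c, le a b -> le b c -> le a c.
Hypothesis join_lub : forall a b, is_lub le a b (join a b).
Hypothesis meet_glb : forall a b, is_glb le a b (meet a b).
Hypothesis meet_join_le :
  forall a b c, le a c -> le (meet (join a b) c) (join a (meet b c)).

Lemma modular_lattice_classesP : modular_lattice_classes le.
Proof.
split=> [a b|a b|a b c j m m' j' le_ac lub_j glb_m glb_m' lub_j'].
- by exists (join a b).
- by exists (meet a b).
have [_ _ j_min] := lub_j; have [le_mj le_mc _] := glb_m.
have [_ _ m'_min] := glb_m'; have [le_aj' le_m'j' _] := lub_j'.
have [le_a_ab le_b_ab _] := join_lub a b.
have le_m_abc : le m (meet (join a b) c).
  have [_ _ abc_max] := meet_glb (join a b) c.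
  by apply: abc_max => //; apply: le_trans le_mj (j_min _ le_a_ab le_b_ab).
have le_a_bc_j' : le (join a (meet b c)) j'.
  have [bc_b bc_c _] := meet_glb b c; have [_ _ a_bc_min] := join_lub a (meet b c).
  by apply: a_bc_min => //; apply: le_trans (m'_min _ bc_b bc_c) le_m'j'.
exact: le_trans le_m_abc (le_trans (meet_join_le b le_ac) le_a_bc_j').
Qed.

End OrderTheory.

Section FiniteLength.

Variable L : nzRingType.

Definition lin_of (U V : lmodType L) (f : U -> V) (f_lin : linear f) :
  {linear U -> V} := HB.pack f (GRing.isLinear.Build L U V *:%R f f_lin).

Lemma submoduleB (X : lmodType L) (M : X -> Prop) u v :
  is_submodule M -> M u -> M v -> M (u - v).
Proof. by move=> [_ MD MZ] Mu Mv; rewrite -scaleN1r; apply/MD/MZ. Qed.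

Lemma submodule_preim (S T : lmodType L) (g : {linear S -> T}) (M : T -> Prop) :
  is_submodule M -> is_submodule (fun s => M (g s)).
Proof.
move=> [M0 MD MZ]; split=> [|u v|a u]; rewrite ?linear0 ?linearD ?linearZ //.
- exact: MD.
- exact: MZ.
Qed.

Lemma submodule_image (S T : lmodType L) (g : {linear S -> T}) (M : S -> Prop) :
  is_submodule M -> is_submodule (fun t => exists2 s, M s & g s = t).
Proof.
move=> [M0 MD MZ]; split.
- by exists 0; rewrite ?linear0.
- by move=> _ _ [s Ms <-] [s' Ms' <-]; exists (s + s'); rewrite ?linearD //; apply: MD.
- by move=> a _ [s Ms <-]; exists (a *: s); rewrite ?linearZ //; apply: MZ.
Qed.

Lemma finite_length_inj (S T : lmodType L) (g : {linear S -> T}) :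
  injective g -> finite_length T -> finite_length S.
Proof.
move=> g_inj [n Tn]; exists n => m M M_sub M_chain.
apply: (Tn m (fun i t => exists2 s, M i s & g s = t)).
- by move=> i; apply: submodule_image.
- move=> i lt_im; have [M_inc [x [Mx nMx]]] := M_chain i lt_im; split.
    by move=> _ [s Ms <-]; exists s => //; apply: M_inc.
  by exists (g x); split; [exists x | case=> s Ms /g_inj eq_sx; rewrite -eq_sx in nMx].
Qed.

Definition strict_chain (X : lmodType L) (M : nat -> X -> Prop) (s : nat) :=
  (forall i, is_submodule (M i)) /\
  (forall i, (i < s)%N ->
     (forall x, M i x -> M i.+1 x) /\ exists x, M i.+1 x /\ ~ M i x).

Lemma strict_chain_grow (X : lmodType L) (C : nat -> X -> Prop) s (N N' : X -> Prop) :
  strict_chain C s -> (forall x, C s x <-> N x) ->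
  is_submodule N' -> (forall x, N x -> N' x) ->
  exists t C', [/\ strict_chain C' t, (forall x, C' t x <-> N' x), (s <= t)%N &
                   ((exists x, N' x /\ ~ N x) -> (s < t)%N)].
Proof.
move=> C_strict CN N'_sub le_NN'; have [C_sub C_chain] := C_strict.
have [[x [N'x nNx]]|eq_NN'] := classic (exists x, N' x /\ ~ N x).
- exists s.+1, (fun i => if (i <= s)%N then C i else N').
  rewrite ltnn leqnn; split=> //; split=> [i|i]; first by case: ifP.
  rewrite ltnS => le_is; have [lt_is|ge_is] := ltnP i s.
    by rewrite (ltnW lt_is); apply: C_chain.
  have -> : i = s by apply/eqP; rewrite eqn_leq le_is ge_is.
  rewrite leqnn; split; first by move=> y /CN; apply: le_NN'.
  by exists x; split => // /CN.
- exists s, C; split=> // y; split=> [Cy|N'y]; first exact/le_NN'/CN.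
  by apply/CN; apply: NNPP => nNy; apply: eq_NN'; exists y.
Qed.

Definition length_bound (X : lmodType L) (n : nat) :=
  forall (M : nat -> X -> Prop) s, strict_chain M s -> (s <= n)%N.

Lemma length_bound_filtrations (X1 X2 : lmodType L) n1 n2
    (K : nat -> X1 -> Prop) (P : nat -> X2 -> Prop) m :
  length_bound X1 n1 -> length_bound X2 n2 ->
  (forall i, is_submodule (K i)) -> (forall i, is_submodule (P i)) ->
  (forall i, (i < m)%N ->
     [/\ forall x, K i x -> K i.+1 x, forall y, P i y -> P i.+1 y &
         (exists x, K i.+1 x /\ ~ K i x) \/ (exists y, P i.+1 y /\ ~ P i y)]) ->
  (m <= n1 + n2)%N.
Proof.
move=> X1n X2n K_sub P_sub KP_step.
have chains j : (j <= m)%N -> exists s1 s2 C1 C2,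
    [/\ (j <= s1 + s2)%N, strict_chain C1 s1, strict_chain C2 s2,
        forall x, C1 s1 x <-> K j x & forall y, C2 s2 y <-> P j y].
  elim: j => [_|j IHj lt_jm].
    by exists 0%N, 0%N, (fun=> K 0%N), (fun=> P 0%N).
  have [s1 [s2 [C1 [C2 [le_j C1s C2s C1K C2P]]]]] := IHj (ltnW lt_jm).
  have [incK incP strict] := KP_step j lt_jm.
  have [t1 [D1 [D1s D1K le_st1 lt_st1]]] := strict_chain_grow C1s C1K (K_sub _) incK.
  have [t2 [D2 [D2s D2P le_st2 lt_st2]]] := strict_chain_grow C2s C2P (P_sub _) incP.
  exists t1, t2, D1, D2; split=> //.
  by case: strict => [/lt_st1|/lt_st2]; lia.
have [s1 [s2 [C1 [C2 [le_m C1s C2s _ _]]]]] := chains m (leqnn m).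
by have := X1n _ _ C1s; have := X2n _ _ C2s; lia.
Qed.

Lemma prod_submodule_subset (X1 X2 : lmodType L) (M M' : X1 * X2 -> Prop) :
  is_submodule M -> is_submodule M' -> (forall z, M z -> M' z) ->
  (forall x, M' (x, 0) -> M (x, 0)) ->
  (forall y, (exists2 z, M' z & z.2 = y) -> exists2 z, M z & z.2 = y) ->
  forall z, M' z -> M z.
Proof.
move=> [_ MD _] M'_sub le_MM' M_ker M_im [x y] M'xy.
have [[x' y'] Mx'y /= eq_y'y] := M_im y (ex_intro2 _ _ (x, y) M'xy erefl).
subst y; have M'x'' : M' (x - x', 0).
  have -> : (x - x', 0) = (x, y') - (x', y') :> X1 * X2.
    by apply: injective_projections; rewrite /= ?subrr.
  exact: submoduleB M'_sub M'xy (le_MM' _ Mx'y).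
have -> : (x, y') = (x - x', 0) + (x', y') :> X1 * X2.
  by apply: injective_projections; rewrite /= ?subrK ?add0r.
exact: MD (M_ker _ M'x'') Mx'y.
Qed.

Lemma in1_linear (X1 X2 : lmodType L) : linear (fun x : X1 => (x, 0) : X1 * X2).
Proof. by move=> a u v; apply: injective_projections; rewrite /= ?scaler0 ?addr0. Qed.

Lemma in2_linear (X1 X2 : lmodType L) : linear (fun y : X2 => (0, y) : X1 * X2).
Proof. by move=> a u v; apply: injective_projections; rewrite /= ?scaler0 ?addr0. Qed.

Lemma pair_linear (Z X1 X2 : lmodType L) (g1 : {linear Z -> X1}) (g2 : {linear Z -> X2}) :
  linear (fun z => (g1 z, g2 z)).
Proof. by move=> a u v; apply: injective_projections; rewrite /= linearP. Qed.

Lemma finite_length_prod (X1 X2 : lmodType L) :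
  finite_length X1 -> finite_length X2 -> finite_length (X1 * X2)%type.
Proof.
move=> [n1 X1n] [n2 X2n]; exists (n1 + n2)%N => m M M_sub M_chain.
apply: (@length_bound_filtrations _ _ _ _
          (fun i x => M i (x, 0)) (fun i y => exists2 z, M i z & z.2 = y)).
- by move=> C s [C_sub C_chain]; apply: X1n C_sub C_chain.
- by move=> C s [C_sub C_chain]; apply: X2n C_sub C_chain.
- by move=> i; apply: (submodule_preim (lin_of (@in1_linear X1 X2))).
- move=> i; exact: (@submodule_image _ _ snd _ (M_sub i)).
move=> i lt_im; have [incM [z [Mz nMz]]] := M_chain i lt_im; split.
- by move=> x /incM.
- by move=> _ [z' Mz' <-]; exists z' => //; apply: incM.
apply: NNPP => /not_or_and[nK nP]; apply: nMz.
apply: (prod_submodule_subset (M_sub i) (M_sub i.+1) incM) => // [x M'x|y M'y].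
- by apply: NNPP => nMx; apply: nK; exists x.
- by apply: NNPP => nMy; apply: nP; exists y.
Qed.

End FiniteLength.

Section Pullback.

Variables (L : nzRingType) (X1 X2 Y : lmodType L).
Variables (f1 : {linear X1 -> Y}) (f2 : {linear X2 -> Y}).

Definition pullback_pred : {pred X1 * X2} := fun z => f1 z.1 == f2 z.2.

Lemma pullback_submod_closed : submod_closed pullback_pred.
Proof.
split=> [|a u v]; rewrite !unfold_in /=; first by rewrite !linear0.
by move=> /eqP eq_u /eqP eq_v; rewrite !linearP eq_u eq_v.
Qed.

HB.instance Definition _ :=
  GRing.isSubmodClosed.Build L (X1 * X2)%type pullback_pred pullback_submod_closed.
Definition pullback := {z : X1 * X2 | z \in pullback_pred}.
HB.instance Definition _ :=
  [SubChoice_isSubLmodule of {z : X1 * X2 | z \in pullback_pred} by <:].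

Lemma pullback_eq (s : pullback) : f1 (val s).1 = f2 (val s).2.
Proof. exact/eqP/(valP s). Qed.

Lemma finite_length_pullback :
  finite_length X1 -> finite_length X2 -> finite_length pullback.
Proof.
move=> fl1 fl2; apply: (@finite_length_inj _ _ _ val val_inj).
exact: finite_length_prod.
Qed.

Lemma pullback_universal (Z : lmodType L)
    (g1 : {linear Z -> X1}) (g2 : {linear Z -> X2}) :
  (forall z, f1 (g1 z) = f2 (g2 z)) ->
  exists h : {linear Z -> pullback}, forall z, val (h z) = (g1 z, g2 z).
Proof.
move=> eq_fg; have g_in z : (g1 z, g2 z) \in pullback_pred by apply/eqP/eq_fg.
have h_lin : linear (fun z => Sub (g1 z, g2 z) (g_in z) : pullback).
  by move=> a u v; apply: val_inj; rewrite [RHS]linearP !SubK; apply: pair_linear.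
by exists (lin_of h_lin) => z; apply: SubK.
Qed.

End Pullback.

Section MapsEndingIn.

Variables (L : nzRingType) (Y : lmodType L).
Implicit Types a b c f g : map_to Y.

Definition map_join f g : map_to Y :=
  existT _ (Build_FLMod (finite_length_prod (fl_finite (projT1 f))
                                             (fl_finite (projT1 g))))
    ((projT2 f \o fst) \+ (projT2 g \o snd) : {linear (projT1 f * projT1 g)%type -> Y}).

Definition map_meet f g : map_to Y :=
  existT _ (Build_FLMod (finite_length_pullback (projT2 f) (projT2 g)
                           (fl_finite (projT1 f)) (fl_finite (projT1 g))))
    (projT2 f \o fst \o val : {linear pullback (projT2 f) (projT2 g) -> Y}).

Lemma map_le_trans a b c : map_le a b -> map_le b c -> map_le a c.
Proof. by move=> [h1 e1] [h2 e2]; exists (h2 \o h1) => x; rewrite e1 e2. Qed.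

Lemma map_join_lub f g : is_lub (@map_le L Y) f g (map_join f g).
Proof.
split=> [|| c [h1 e1] [h2 e2]].
- by exists (lin_of (@in1_linear _ _ (projT1 g))) => x /=; rewrite linear0 addr0.
- by exists (lin_of (@in2_linear _ (projT1 f) _)) => y /=; rewrite linear0 add0r.
- by exists ((h1 \o fst) \+ (h2 \o snd)) => -[x y] /=; rewrite linearD e1 e2.
Qed.

Lemma map_meet_glb f g : is_glb (@map_le L Y) f g (map_meet f g).
Proof.
split=> [|| c [h1 e1] [h2 e2]].
- by exists (fst \o val).
- by exists (snd \o val) => s; apply: pullback_eq.
- have eq_h12 x : projT2 f (h1 x) = projT2 g (h2 x) by rewrite -(e1 x) -(e2 x).
  have [h eh] := pullback_universal (f1 := projT2 f) (f2 := projT2 g) eq_h12.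
  by exists h => x /=; rewrite eh.
Qed.

Lemma map_meet_join_le a b c :
  map_le a c -> map_le (map_meet (map_join a b) c) (map_join a (map_meet b c)).
Proof.
move=> [h e]; pose S := pullback (projT2 (map_join a b)) (projT2 c).
have eq_bc (q : S) :
    projT2 b (val q).1.2 = projT2 c ((val q).2 - h (val q).1.1).
  by rewrite linearB -e -(pullback_eq q) /= addrAC subrr add0r.
have [k ek] := pullback_universal (f1 := projT2 b) (f2 := projT2 c)
  (g1 := snd \o fst \o val) (g2 := (snd \o val) \- (h \o fst \o fst \o val)) eq_bc.
exists (lin_of (pair_linear (fst \o fst \o val : {linear S -> _}) k)) => q.
by rewrite /= ek.
Qed.

End MapsEndingIn.

Theorem proposition2p3 (k : comNzRingType) (L : nzRingType)
  (phi : {rmorphism k -> L}) (hL : artin_algebra phi)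
  (Y : lmodType L) (hY : finite_length Y) :
  modular_lattice_classes (@map_le L Y).
Proof.
exact: (modular_lattice_classesP (@map_le_trans L Y) (@map_join_lub L Y)
          (@map_meet_glb L Y) (@map_meet_join_le L Y)).
Qed.
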